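(* Let $K\ge 1$ and fix an index $j\in\{1,\dots,K\}$. Let $\eta_1\in(0,1]$, $\eta_2\in(0,1]$, $P>0$, $\sigma_b^2>0$, $\sigma_D^2>0$, and for each $k\in\{1,\dots,K\}$ let $h_k,g_k\in\mathbb{C}\setminus\{0\}$ and $v_k\in\mathbb{R}$ with $v_k\ge -\eta_1\eta_2P|h_k|^2$. Define $$a_k=P|h_k|^2+\max\Big\{0,\frac{v_k}{\eta_1}\Big\}+\min\Big\{0,\frac{v_k}{\eta_1\eta_2}\Big\}+\sigma_b^2,$$ $$U_k=\Big(1+\min\Big\{0,\frac{v_k}{\eta_1\eta_2P|h_k|^2}\Big\}\Big)P|h_k|^2+\sigma_b^2 .$$ Fix values $x_k\in[\sigma_b^2,U_k]$ for all $k\neq j$, and for $x_j\in[\sigma_b^2,U_j]$ define $$F_1(x_j)=\Big(\sqrt{\eta_1|g_j|^2(a_j-x_j)\big(1-\tfrac{\sigma_b^2}{x_j}\big)}+\sum_{k\neq j}\sqrt{\eta_1|g_k|^2(a_k-x_k)\big(1-\tfrac{\sigma_b^2}{x_k}\big)}\Big)^2,$$ $$F_2(x_j)=\eta_1|g_j|^2(a_j-x_j)\frac{\sigma_b^2}{x_j}+\sum_{k\neq j}\eta_1|g_k|^2(a_k-x_k)\frac{\sigma_b^2}{x_k}+\sigma_D^2 .$$ Then for every $q\ge 0$ the function $x_j\mapsto F_1(x_j)-qF_2(x_j)$ is concave on $[\sigma_b^2,U_j]$.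
   Context: This is the per-coordinate subproblem arising in maximizing the end-to-end SNR of a wireless-powered amplify-and-forward relay network with power splitting: $x_k=\lambda_{k,I}P|h_k|^2+\sigma_b^2$ where $\lambda_{k,I}$ is the power-splitting ratio for information at relay $k$, $v_k$ is the battery energy-level variation, $h_k,g_k$ are source–relay and relay–destination channel gains, $\eta_1$ the energy conversion efficiency, $\eta_2$ the storage efficiency. In the paper the parameter $q$ is a value of the ratio $F_1/F_2$, hence nonnegative. *)

From HB Require Import structures.
From mathcomp Require Import all_boot all_order all_algebra.
From mathcomp Require Import complex.
Set Implicit Arguments. Unset Strict Implicit. Unset Printing Implicit Defensive.
Import Order.TTheory GRing.Theory Num.Theory.
Local Open Scope ring_scope.

Definition csq (R : rcfType) (z : R[i]) : R := Normc.normc z ^+ 2.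

Definition concave_on (R : rcfType) (lo hi : R) (f : R -> R) : Prop :=
  forall x y t : R, lo <= x <= hi -> lo <= y <= hi -> 0 <= t <= 1 ->
    t * f x + (1 - t) * f y <= f (t * x + (1 - t) * y).

Definition a_coef (R : rcfType) (eta1 eta2 P sb2 : R) (h : R[i]) (v : R) : R :=
  P * csq h + Num.max 0 (v / eta1) + Num.min 0 (v / (eta1 * eta2)) + sb2.

Definition U_coef (R : rcfType) (eta1 eta2 P sb2 : R) (h : R[i]) (v : R) : R :=
  (1 + Num.min 0 (v / (eta1 * eta2 * P * csq h))) * P * csq h + sb2.

Definition F1 (R : rcfType) (K : nat) (j : 'I_K) (eta1 eta2 P sb2 : R)
  (h g : 'I_K -> R[i]) (v x : 'I_K -> R) (xj : R) : R :=
  (Num.sqrt (eta1 * csq (g j) * (a_coef eta1 eta2 P sb2 (h j) (v j) - xj) * (1 - sb2 / xj))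
   + \sum_(k < K | k != j)
       Num.sqrt (eta1 * csq (g k) * (a_coef eta1 eta2 P sb2 (h k) (v k) - x k)
                 * (1 - sb2 / x k))) ^+ 2.

Definition F2 (R : rcfType) (K : nat) (j : 'I_K) (eta1 eta2 P sb2 sD2 : R)
  (h g : 'I_K -> R[i]) (v x : 'I_K -> R) (xj : R) : R :=
  eta1 * csq (g j) * (a_coef eta1 eta2 P sb2 (h j) (v j) - xj) * (sb2 / xj)
  + \sum_(k < K | k != j)
      eta1 * csq (g k) * (a_coef eta1 eta2 P sb2 (h k) (v k) - x k) * (sb2 / x k)
  + sD2.

From HB Require Import structures.
From mathcomp Require Import all_boot all_order all_algebra.
From mathcomp Require Import complex.
From mathcomp Require Import ring lra.
Set Implicit Arguments. Unset Strict Implicit. Unset Printing Implicit Defensive.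

Import Order.TTheory GRing.Theory Num.Theory.
Local Open Scope ring_scope.

(* Only x_j varies, so F_1 - q F_2 is (sqrt f + S)^2 - q (g + T + d) for constants S >= 0, T, d, with
   f(w) = c (a - w)(1 - s/w) = c (a + s - w) - c a s / w  concave and nonnegative on [s, a], and
   g(w) = c (a - w) s / w = c a s / w - c s.  Expanding the square, the function is
   f + 2 S sqrt f - q c a s / w + const, a nonnegative combination of concave functions, because
   sqrt is concave and nondecreasing and w |-> 1/w is convex on (0, oo).  Since U_j <= a_j,
   concavity on [s, a_j] gives concavity on [s, U_j]. *)

Section Concavity.
Variable R : rcfType.
Implicit Types (lo hi : R) (f g : R -> R).

Lemma convex_comb_itv lo hi x y t : lo <= x <= hi -> lo <= y <= hi -> 0 <= t <= 1 ->
  lo <= t * x + (1 - t) * y <= hi.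
Proof.
move=> /andP[lx xh] /andP[ly yh] /andP[t0 t1].
have t1' : 0 <= 1 - t by lra.
by apply/andP; split; nra.
Qed.

Lemma concave_on_sub lo hi hi' f : hi' <= hi -> concave_on lo hi f -> concave_on lo hi' f.
Proof.
move=> le_hi f_cvx x y t /andP[lx xh] /andP[ly yh]; apply: f_cvx.
  by rewrite lx (le_trans xh).
by rewrite ly (le_trans yh).
Qed.

Lemma concave_on_ext lo hi f g : (forall x, lo <= x <= hi -> f x = g x) ->
  concave_on lo hi f -> concave_on lo hi g.
Proof.
move=> fg f_cvx x y t hx hy ht.
rewrite -!fg ?convex_comb_itv //; exact: f_cvx.
Qed.

Lemma concave_onD lo hi f g : concave_on lo hi f -> concave_on lo hi g ->
  concave_on lo hi (fun x => f x + g x).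
Proof.
move=> f_cvx g_cvx x y t hx hy ht.
have := f_cvx x y t hx hy ht; have := g_cvx x y t hx hy ht; lra.
Qed.

Lemma concave_onZ lo hi (c : R) f : 0 <= c -> concave_on lo hi f ->
  concave_on lo hi (fun x => c * f x).
Proof.
move=> c_ge0 f_cvx x y t hx hy ht.
rewrite mulrCA [(1 - t) * _]mulrCA -mulrDr.
exact: ler_wpM2l (f_cvx x y t hx hy ht).
Qed.

Lemma concave_on_affine lo hi (m b : R) : concave_on lo hi (fun x => m * x + b).
Proof. by move=> x y t _ _ _; rewrite -subr_ge0 (_ : _ - _ = 0) //; ring. Qed.

Lemma concave_on_cst lo hi (b : R) : concave_on lo hi (fun=> b).
Proof. by move=> x y t _ _ _; rewrite -mulrDl subrKC mul1r. Qed.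

Lemma inv_convex_gap (x y t : R) : 0 < x -> 0 < y -> 0 <= t <= 1 ->
  t / x + (1 - t) / y - (t * x + (1 - t) * y)^-1
  = t * (1 - t) * (x - y) ^+ 2 / (x * y * (t * x + (1 - t) * y)).
Proof.
move=> x_gt0 y_gt0 /andP[t0 t1].
have z_gt0 : 0 < t * x + (1 - t) * y by nra.
by field; rewrite !lt0r_neq0 ?mulr_gt0.
Qed.

Lemma concave_on_oppV lo hi : 0 < lo -> concave_on lo hi (fun x => - x^-1).
Proof.
move=> lo_gt0 x y t /andP[lx _] /andP[ly _] ht.
have x_gt0 : 0 < x by lra.
have y_gt0 : 0 < y by lra.
have /andP[t0 t1] := ht.
have z_gt0 : 0 < t * x + (1 - t) * y by nra.
have gap_ge0 : 0 <= t / x + (1 - t) / y - (t * x + (1 - t) * y)^-1.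
  rewrite inv_convex_gap //; apply: divr_ge0.
    by rewrite mulr_ge0 ?sqr_ge0 // mulr_ge0 // subr_ge0.
  exact: ltW (mulr_gt0 (mulr_gt0 x_gt0 y_gt0) z_gt0).
rewrite /= !mulrN; lra.
Qed.

Lemma sqrt_conv_comb_le (A B t : R) : 0 <= A -> 0 <= B -> 0 <= t <= 1 ->
  t * Num.sqrt A + (1 - t) * Num.sqrt B <= Num.sqrt (t * A + (1 - t) * B).
Proof.
move=> A_ge0 B_ge0 /andP[t0 t1].
suff comb_le : forall a b : R, 0 <= a -> 0 <= b ->
    t * a + (1 - t) * b <= Num.sqrt (t * a ^+ 2 + (1 - t) * b ^+ 2).
  by have := comb_le _ _ (sqrtr_ge0 A) (sqrtr_ge0 B); rewrite !sqr_sqrtr.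
move=> a b a_ge0 b_ge0.
have comb_ge0 : 0 <= t * a + (1 - t) * b by nra.
rewrite -{1}(ger0_norm comb_ge0) -sqrtr_sqr ler_sqrt; last by nra.
have : 0 <= t * (1 - t) * (a - b) ^+ 2 by rewrite mulr_ge0 ?sqr_ge0 //; nra.
nra.
Qed.

Lemma concave_on_sqrt lo hi f : (forall x, lo <= x <= hi -> 0 <= f x) ->
  concave_on lo hi f -> concave_on lo hi (fun x => Num.sqrt (f x)).
Proof.
move=> f_ge0 f_cvx x y t hx hy ht.
have fx_ge0 := f_ge0 x hx.
have fy_ge0 := f_ge0 y hy.
apply: le_trans (sqrt_conv_comb_le fx_ge0 fy_ge0 ht) _.
by rewrite ler_sqrt ?f_cvx // f_ge0 ?convex_comb_itv.
Qed.

End Concavity.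

Lemma csq_gt0 (R : rcfType) (z : R[i]) : z != 0 -> 0 < csq z.
Proof.
move=> z_neq0; rewrite /csq exprn_gt0 // lt_neqAle eq_sym.
apply/andP; split.
  by apply: contra z_neq0 => /eqP/(@Normc.eq0_normc R)->.
by case: z {z_neq0} => a b; exact: sqrtr_ge0.
Qed.

Lemma U_coef_le_a_coef (R : rcfType) (eta1 eta2 P s v : R) (h : R[i]) :
  0 < eta1 -> 0 < eta2 -> 0 < P -> h != 0 ->
  U_coef eta1 eta2 P s h v <= a_coef eta1 eta2 P s h v.
Proof.
move=> eta1_gt0 eta2_gt0 P_gt0 /(@csq_gt0 R); rewrite /U_coef /a_coef.
move: (csq h) => H H_gt0.
have eta_gt0 : 0 < eta1 * eta2 by rewrite mulr_gt0.
have D_gt0 : 0 < eta1 * eta2 * P * H by rewrite !mulr_gt0.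
have [v_ge0 | v_lt0] := lerP 0 v.
  rewrite !min_l ?divr_ge0 ?(ltW D_gt0) ?(ltW eta_gt0) //.
  have : 0 <= Num.max 0 (v / eta1) by rewrite le_max lexx.
  lra.
have v_div_le0 w : 0 < w -> v / w <= 0.
  by move=> w_gt0; rewrite ltW // pmulr_llt0 ?invr_gt0.
rewrite max_l ?min_r ?v_div_le0 //.
have -> : (1 + v / (eta1 * eta2 * P * H)) * P * H = P * H + v / (eta1 * eta2).
  by field; rewrite !lt0r_neq0.
lra.
Qed.

Lemma concave_on_snr_term (R : rcfType) (c a s S T d q : R) :
  0 < c -> 0 < s -> 0 <= S -> 0 <= q ->
  concave_on s a (fun w =>
    (Num.sqrt (c * (a - w) * (1 - s / w)) + S) ^+ 2 - q * (c * (a - w) * (s / w) + T + d)).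
Proof.
move=> c_gt0 s_gt0 S_ge0 q_ge0 x y t hx hy.
have a_gt0 : 0 < a by case/andP: hx => ? ?; lra.
move: x y t hx hy.
pose f w := (- c * w + c * (a + s)) + c * a * s * - w^-1.
have f_eq w : 0 < w -> c * (a - w) * (1 - s / w) = f w.
  by move=> w_gt0; rewrite /f; field; rewrite lt0r_neq0.
have f_ge0 : forall w, s <= w <= a -> 0 <= f w.
  move=> w /andP[sw wa]; have w_gt0 : 0 < w by lra.
  have s_div_le1 : s / w <= 1 by rewrite ler_pdivrMr // mul1r.
  rewrite -f_eq // !mulr_ge0 //; lra.
have cas_ge0 : 0 <= c * a * s by rewrite !mulr_ge0 // ltW.
have f_cvx : concave_on s a f.
  apply: concave_onD; first exact: concave_on_affine.
  exact: concave_onZ cas_ge0 (concave_on_oppV s_gt0).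
apply: (@concave_on_ext _ _ _ (fun w =>
  f w + 2 * S * Num.sqrt (f w) + q * (c * a * s) * - w^-1 + (S ^+ 2 + q * c * s - q * (T + d)))).
  move=> w w_in; have w_gt0 : 0 < w by case/andP: w_in; lra.
  rewrite f_eq // sqrrD (sqr_sqrtr (f_ge0 w w_in)).
  by rewrite /f; field; rewrite lt0r_neq0.
apply: concave_onD; last exact: concave_on_cst.
apply: concave_onD; last exact: concave_onZ (mulr_ge0 q_ge0 cas_ge0) (concave_on_oppV s_gt0).
apply: concave_onD => //.
exact: concave_onZ (mulr_ge0 (ler0n _ 2) S_ge0) (concave_on_sqrt f_ge0 f_cvx).
Qed.

Theorem lemma2 (R : rcfType) (K : nat) (j : 'I_K)
  (eta1 eta2 P sb2 sD2 : R) (h g : 'I_K -> R[i]) (v x : 'I_K -> R) (q : R) :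
  0 < eta1 <= 1 -> 0 < eta2 <= 1 -> 0 < P -> 0 < sb2 -> 0 < sD2 ->
  (forall k, h k != 0) -> (forall k, g k != 0) ->
  (forall k, - (eta1 * eta2 * P * csq (h k)) <= v k) ->
  (forall k, k != j -> sb2 <= x k <= U_coef eta1 eta2 P sb2 (h k) (v k)) ->
  0 <= q ->
  concave_on sb2 (U_coef eta1 eta2 P sb2 (h j) (v j))
    (fun xj => F1 j eta1 eta2 P sb2 h g v x xj
               - q * F2 j eta1 eta2 P sb2 sD2 h g v x xj).
Proof.
move=> /andP[eta1_gt0 _] /andP[eta2_gt0 _] P_gt0 sb2_gt0 _ h_neq0 g_neq0 _ _ q_ge0.
apply: (concave_on_sub (U_coef_le_a_coef _ _ eta1_gt0 eta2_gt0 P_gt0 (h_neq0 j))).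
apply: concave_on_snr_term => //.
- by rewrite mulr_gt0 ?csq_gt0.
- by apply: sumr_ge0 => k _; exact: sqrtr_ge0.
Qed.
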